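(* For every integer $j\ge 0$, $$\int_0^1\frac{\operatorname{Ti}_{2j+1}(t)}{1+t^2}\,dt=\frac12\sum_{k=0}^{2j}(-1)^k\,\beta(k+1)\,\beta(2j-k+1).$$
   Context: The inverse tangent integral of order $r\ge1$ is $\operatorname{Ti}_r(x)=\sum_{k=1}^\infty\frac{(-1)^{k-1}x^{2k-1}}{(2k-1)^r}$ for $|x|\le 1$. The Dirichlet beta function is $\beta(r)=\sum_{k=1}^\infty \frac{(-1)^{k-1}}{(2k-1)^r}=\operatorname{Ti}_r(1)$ for integers $r\ge1$. *)

From Stdlib Require Import Reals.
From Coquelicot Require Import Coquelicot.
Open Scope R_scope.

(* Inverse tangent integral of order r:
   Ti_r(x) = sum_{k>=1} (-1)^(k-1) x^(2k-1) / (2k-1)^r, reindexed with n = k-1. *)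
Definition Ti (r : nat) (x : R) : R :=
  Series (fun n : nat => (-1) ^ n * x ^ (2 * n + 1) / (INR (2 * n + 1)) ^ r).

Definition dbeta (r : nat) : R :=
  Series (fun n : nat => (-1) ^ n / (INR (2 * n + 1)) ^ r).

(* On (-1,1) the function F(y) = 1/2 sum_k (-1)^k Ti_{k+1}(y) Ti_{2j-k+1}(y) is an
   antiderivative of Ti_{2j+1}(y)/(1+y^2): writing Ti_r(t) = t p_r(t^2), one has
   Ti_{r+1}' = p_r(t^2) and p_0(t^2) = 1/(1+t^2), so the derivative of F telescopes to
   t p_0(t^2) p_{2j+1}(t^2).  At the endpoint t = 1 the series defining Ti_r (r >= 1) are
   alternating with terms bounded by 1/(n+1), hence converge uniformly on [0,1]; thus both
   F and the integral are continuous up to 1, and F(1) is the beta sum. *)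
From Stdlib Require Import Reals Lra Lia.
From Coquelicot Require Import Coquelicot.
Open Scope R_scope.

(** * Power series in [t^2] *)

Definition ti_coef (a n : nat) : R := (-1) ^ n / INR (2 * n + 1) ^ a.

Definition ti_pser (a : nat) (u : R) : R := PSeries (ti_coef a) u.

Lemma INR_odd_ge1 (n : nat) : 1 <= INR (2 * n + 1).
Proof. rewrite plus_INR, mult_INR; simpl; pose proof (pos_INR n); lra. Qed.

Lemma INR_odd_neq0 (n : nat) : INR (2 * n + 1) <> 0.
Proof. pose proof (INR_odd_ge1 n); lra. Qed.

Lemma Rabs_ti_coef_le1 (a n : nat) : Rabs (ti_coef a n) <= 1.
Proof.
  unfold ti_coef, Rdiv.
  rewrite Rabs_mult, pow_1_abs, Rmult_1_l, Rabs_inv.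
  pose proof (pow_R1_Rle _ a (INR_odd_ge1 n)).
  rewrite Rabs_pos_eq by lra.
  rewrite <- Rinv_1; apply Rinv_le_contravar; lra.
Qed.

Lemma CV_radius_ti_coef_gt (a : nat) (u : R) :
  Rabs u < 1 -> Rbar_lt (Rabs u) (CV_radius (ti_coef a)).
Proof.
  intro Hu; apply (Rbar_lt_le_trans _ 1); [exact Hu|].
  apply (CV_radius_bounded (ti_coef a)).
  exists 1; intro n; rewrite pow1, Rmult_1_r; apply Rabs_ti_coef_le1.
Qed.

Lemma ex_pseries_ti_coef (a : nat) (u : R) : Rabs u < 1 -> ex_pseries (ti_coef a) u.
Proof. intro Hu; apply CV_radius_inside, CV_radius_ti_coef_gt, Hu. Qed.

Lemma Ti_ti_pser (a : nat) (t : R) : Ti a t = t * ti_pser a (t ^ 2).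
Proof.
  unfold Ti, ti_pser, PSeries; rewrite <- Series_scal_l.
  apply Series_ext; intro n; unfold ti_coef.
  rewrite <- pow_mult, pow_add, pow_1; field.
  apply pow_nonzero, INR_odd_neq0.
Qed.

Lemma ti_pser_0 (u : R) : Rabs u < 1 -> ti_pser 0 u = / (1 + u).
Proof.
  intro Hu; unfold ti_pser.
  assert (Hp : PSeries (ti_coef 0) u = 1 - u * PSeries (ti_coef 0) u).
  { rewrite (PSeries_decr_1 _ _ (ex_pseries_ti_coef 0 u Hu)) at 1.
    rewrite (PSeries_ext (PS_decr_1 (ti_coef 0)) (PS_opp (ti_coef 0))), PSeries_opp.
    - unfold ti_coef; simpl; field.
    - intro n; unfold PS_decr_1, PS_opp, ti_coef, opp; simpl; field. }
  assert (1 + u <> 0) by (apply Rabs_lt_between in Hu; lra).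
  apply (Rmult_eq_reg_r (1 + u)); [|assumption].
  rewrite Rinv_l by assumption; lra.
Qed.

(* The coefficient identity (2n+1) c_{a+1}(n) = c_a(n) behind Ti_{a+1}' = Ti_a / t. *)
Lemma ti_pser_S (a : nat) (u : R) : Rabs u < 1 ->
  ti_pser (S a) u + 2 * u * PSeries (PS_derive (ti_coef (S a))) u = ti_pser a u.
Proof.
  intro Hu; unfold ti_pser.
  rewrite Rmult_assoc, <- PSeries_incr_1, <- PSeries_scal, <- PSeries_plus.
  2: apply ex_pseries_ti_coef, Hu.
  2: { apply ex_pseries_scal; [apply Rmult_comm|].
       apply ex_pseries_incr_1, ex_pseries_derive, CV_radius_ti_coef_gt, Hu. }
  apply PSeries_ext; intros [|n];
    unfold PS_plus, PS_scal, PS_incr_1, PS_derive, ti_coef, plus, scal, zero;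
    cbn -[INR pow Nat.mul Nat.add]; unfold mult; cbn -[INR pow Nat.mul Nat.add].
  - simpl; rewrite !pow1; field.
  - assert (Hk : INR (2 * S n + 1) = 2 * INR (S n) + 1)
      by (rewrite plus_INR, mult_INR; simpl; ring).
    pose proof (INR_odd_neq0 (S n)) as Hn; rewrite Hk in Hn |- *; rewrite <- !tech_pow_Rmult.
    field; split; [apply pow_nonzero|]; exact Hn.
Qed.

Lemma is_derive_eq (f : R -> R) (x l l' : R) :
  is_derive f x l -> l = l' -> is_derive f x l'.
Proof. intros H <-; exact H. Qed.

Lemma Rabs_sqr_lt1 (t : R) : Rabs t < 1 -> Rabs (t ^ 2) < 1.
Proof. intro Ht; rewrite <- RPow_abs; pose proof (Rabs_pos t); simpl; nra. Qed.

Lemma is_derive_Ti (a : nat) (t : R) :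
  Rabs t < 1 -> is_derive (Ti (S a)) t (ti_pser a (t ^ 2)).
Proof.
  intro Ht; pose proof (Rabs_sqr_lt1 t Ht) as Ht2.
  apply (is_derive_ext (fun s => s * ti_pser (S a) (s ^ 2))).
  { intro s; symmetry; apply Ti_ti_pser. }
  assert (Hsq : is_derive (fun s => ti_pser (S a) (s ^ 2)) t
                  (2 * t * PSeries (PS_derive (ti_coef (S a))) (t ^ 2))).
  { eapply is_derive_eq.
    - apply (is_derive_comp (ti_pser (S a)) (fun s => s ^ 2)).
      + apply is_derive_PSeries, CV_radius_ti_coef_gt, Ht2.
      + apply is_derive_Reals, (derivable_pt_lim_pow t 2).
    - unfold scal; simpl; unfold mult; simpl; ring. }
  rewrite <- (ti_pser_S a _ Ht2).
  eapply is_derive_eq.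
  - apply (is_derive_mult (fun s => s) (fun s => ti_pser (S a) (s ^ 2)));
      [apply is_derive_id | exact Hsq | apply Rmult_comm].
  - rewrite mult_one_l; unfold plus, mult; simpl; ring.
Qed.

(** * The antiderivative on (-1,1) *)

Lemma alt_sum_telescope (A : nat -> R) (m : nat) :
  sum_f_R0 (fun k => (-1) ^ k * (A k + A (S k))) m = A 0%nat + (-1) ^ m * A (S m).
Proof. induction m as [|m IH]; simpl; [|rewrite IH]; ring. Qed.

Definition Ti_antideriv (j : nat) (y : R) : R :=
  / 2 * sum_f_R0 (fun k => (-1) ^ k * Ti (k + 1) y * Ti (2 * j - k + 1) y) (2 * j).

Lemma is_derive_Ti_mul (a b : nat) (y : R) : Rabs y < 1 ->
  is_derive (fun t => Ti (S a) t * Ti (S b) t) y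
    (y * (ti_pser a (y ^ 2) * ti_pser (S b) (y ^ 2)
          + ti_pser (S a) (y ^ 2) * ti_pser b (y ^ 2))).
Proof.
  intro Hy; eapply is_derive_eq.
  - apply (is_derive_mult (Ti (S a)) (Ti (S b)));
      [apply is_derive_Ti, Hy | apply is_derive_Ti, Hy | apply Rmult_comm].
  - rewrite !Ti_ti_pser; unfold plus, mult; simpl; ring.
Qed.

Lemma is_derive_Ti_antideriv (j : nat) (y : R) : Rabs y < 1 ->
  is_derive (Ti_antideriv j) y (Ti (2 * j + 1) y / (1 + y ^ 2)).
Proof.
  intro Hy.
  set (f := fun k t => (-1) ^ k * (Ti (S k) t * Ti (S (2 * j - k)) t)).
  apply (is_derive_ext (fun t => / 2 * sum_n (fun k => f k t) (2 * j))).
  { intro t; unfold Ti_antideriv, f; rewrite sum_n_Reals; f_equal.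
    apply sum_eq; intros k _; rewrite !Nat.add_1_r; ring. }
  eapply is_derive_eq.
  - apply (is_derive_scal (fun t => sum_n (fun k => f k t) (2 * j))).
    apply (is_derive_sum_n f); intros k _.
    apply (is_derive_scal (fun t => Ti (S k) t * Ti (S (2 * j - k)) t)), is_derive_Ti_mul, Hy.
  - set (A := fun k => ti_pser k (y ^ 2) * ti_pser (2 * j + 1 - k) (y ^ 2)).
    rewrite sum_n_Reals, (sum_eq _ (fun k => (-1) ^ k * (A k + A (S k)) * y)).
    2: { intros k Hk; unfold A.
         replace (2 * j + 1 - k)%nat with (S (2 * j - k)) by lia.
         replace (2 * j + 1 - S k)%nat with (2 * j - k)%nat by lia.
         ring. }
    rewrite <- scal_sum, alt_sum_telescope, pow_1_even; unfold A.
    replace (2 * j + 1 - 0)%nat with (2 * j + 1)%nat by lia.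
    replace (2 * j + 1 - S (2 * j))%nat with 0%nat by lia.
    replace (S (2 * j)) with (2 * j + 1)%nat by lia.
    rewrite Ti_ti_pser, ti_pser_0 by (apply Rabs_sqr_lt1, Hy).
    assert (1 + y ^ 2 <> 0) by (pose proof (pow2_ge_0 y); lra).
    field; assumption.
Qed.

Lemma Ti_0 (c : nat) : Ti c 0 = 0.
Proof. rewrite Ti_ti_pser; ring. Qed.

Lemma Ti_1 (c : nat) : Ti c 1 = dbeta c.
Proof. apply Series_ext; intro n; rewrite pow1, Rmult_1_r; reflexivity. Qed.

Lemma Ti_antideriv_0 (j : nat) : Ti_antideriv j 0 = 0.
Proof.
  unfold Ti_antideriv; rewrite (sum_eq _ (fun _ => 0)), sum_cte.
  - ring.
  - intros k _; rewrite !Ti_0; ring.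
Qed.

(** * Uniform convergence on [0,1] *)

Lemma alternated_series_remainder (U : nat -> R) (l : R) (n : nat) :
  Un_decreasing U -> Un_cv U 0 ->
  Un_cv (fun N => sum_f_R0 (tg_alt U) N) l ->
  Rabs (l - sum_f_R0 (tg_alt U) n) <= U (S n).
Proof.
  intros Hd Hc Hl.
  destruct (Nat.Even_or_Odd n) as [[m ->]|[m ->]].
  - pose proof (alternated_series_ineq U l m Hd Hc Hl) as [H1 H2].
    rewrite tech5 in H1.
    replace (tg_alt U (S (2 * m))) with (- U (S (2 * m))) in H1
      by (unfold tg_alt; rewrite pow_1_odd; ring).
    apply Rabs_le; lra.
  - pose proof (alternated_series_ineq U l m Hd Hc Hl) as [H1 _].
    pose proof (alternated_series_ineq U l (S m) Hd Hc Hl) as [_ H2].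
    replace (2 * S m)%nat with (S (2 * m + 1)) in H2 by lia.
    replace (S (2 * m)) with (2 * m + 1)%nat in H1 by lia.
    rewrite tech5 in H2.
    replace (tg_alt U (S (2 * m + 1))) with (U (S (2 * m + 1))) in H2
      by (unfold tg_alt; replace (S (2 * m + 1)) with (2 * S m)%nat by lia;
          rewrite pow_1_even; ring).
    apply Rabs_le; lra.
Qed.

Lemma Un_cv_inv_INR_S : Un_cv (fun n => / INR (S n)) 0.
Proof.
  apply is_lim_seq_Reals.
  replace (Finite 0) with (Rbar_inv p_infty) by reflexivity.
  apply is_lim_seq_inv; [|discriminate].
  apply (is_lim_seq_incr_1 INR), is_lim_seq_INR.
Qed.

Definition ti_term (c : nat) (t : R) (n : nat) : R := t ^ (2 * n + 1) / INR (2 * n + 1) ^ c.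

Lemma ti_term_bounds (a : nat) (t : R) (n : nat) :
  0 <= t <= 1 -> 0 <= ti_term (S a) t n <= / INR (S n).
Proof.
  intro Ht; unfold ti_term, Rdiv.
  assert (0 < INR (S n) <= INR (2 * n + 1)) by (split; [apply lt_0_INR | apply le_INR]; lia).
  pose proof (pow_R1_Rle _ a (INR_odd_ge1 n)).
  assert (0 <= t ^ (2 * n + 1) <= 1).
  { split; [apply pow_le; lra|]. rewrite <- (pow1 (2 * n + 1)); apply pow_incr; lra. }
  assert (INR (S n) <= INR (2 * n + 1) ^ S a) by (rewrite <- tech_pow_Rmult; nra).
  assert (0 < / INR (2 * n + 1) ^ S a <= / INR (S n))
    by (split; [apply Rinv_0_lt_compat | apply Rinv_le_contravar]; lra).
  split; nra.
Qed.

Lemma ti_term_decreasing (c : nat) (t : R) :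
  0 <= t <= 1 -> Un_decreasing (ti_term c t).
Proof.
  intros Ht n; unfold ti_term.
  pose proof (INR_odd_ge1 n).
  assert (INR (2 * n + 1) <= INR (2 * S n + 1)) by (apply le_INR; lia).
  assert (0 < INR (2 * n + 1) ^ c) by (apply pow_lt; lra).
  assert (INR (2 * n + 1) ^ c <= INR (2 * S n + 1) ^ c) by (apply pow_incr; lra).
  assert (t ^ (2 * S n + 1) <= t ^ (2 * n + 1)).
  { replace (2 * S n + 1)%nat with (2 * n + 1 + 2)%nat by lia; rewrite pow_add.
    assert (0 <= t ^ (2 * n + 1)) by (apply pow_le; lra).
    assert (t ^ 2 <= 1) by (simpl; nra). nra. }
  unfold Rdiv; apply Rmult_le_compat; try (apply pow_le; lra);
    [left; apply Rinv_0_lt_compat; lra | assumption | apply Rinv_le_contravar; assumption].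
Qed.

Lemma ti_term_cv0 (a : nat) (t : R) : 0 <= t <= 1 -> Un_cv (ti_term (S a) t) 0.
Proof.
  intro Ht; apply is_lim_seq_Reals.
  apply (is_lim_seq_le_le (fun _ => 0) (ti_term (S a) t) (fun n => / INR (S n))).
  - intro n; apply ti_term_bounds, Ht.
  - apply is_lim_seq_const.
  - apply is_lim_seq_Reals, Un_cv_inv_INR_S.
Qed.

Lemma Ti_sub_partial_sum (a : nat) (t : R) (n : nat) : 0 <= t <= 1 ->
  Rabs (Ti (S a) t - sum_f_R0 (tg_alt (ti_term (S a) t)) n) <= / INR (S (S n)).
Proof.
  intro Ht.
  destruct (alternated_series _ (ti_term_decreasing (S a) t Ht) (ti_term_cv0 a t Ht)) as [l Hl].
  replace (Ti (S a) t) with l.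
  - eapply Rle_trans; [apply alternated_series_remainder; [| |exact Hl]|].
    + apply ti_term_decreasing, Ht.
    + apply ti_term_cv0, Ht.
    + apply ti_term_bounds, Ht.
  - symmetry; apply is_series_unique, is_series_Reals.
    intros eps Heps; destruct (Hl eps Heps) as [N HN]; exists N; intros m Hm.
    rewrite (sum_eq _ (tg_alt (ti_term (S a) t))); [apply HN, Hm|].
    intros k _; unfold tg_alt, ti_term, Rdiv; ring.
Qed.

(** * Continuous extensions to the real line *)

(* The retraction of R onto [0,1]; composing with it lets functions that are only
   continuous on [0,1] be integrated with Coquelicot's global continuity lemmas. *)
Definition clamp01 (t : R) : R := (Rabs t - Rabs (t - 1) + 1) / 2.

Lemma clamp01_in (t : R) : 0 <= clamp01 t <= 1.
Proof. unfold clamp01, Rabs; destruct (Rcase_abs t), (Rcase_abs (t - 1)); lra. Qed.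

Lemma clamp01_id (t : R) : 0 <= t <= 1 -> clamp01 t = t.
Proof. intro Ht; unfold clamp01, Rabs; destruct (Rcase_abs t), (Rcase_abs (t - 1)); lra. Qed.

Lemma continuous_clamp01 (x : R) : continuous clamp01 x.
Proof.
  apply (continuous_mult (fun t => Rabs t - Rabs (t - 1) + 1) (fun _ => / 2));
    [|apply continuous_const].
  apply (continuous_plus (fun t => Rabs t - Rabs (t - 1)) (fun _ => 1));
    [|apply continuous_const].
  apply (continuous_minus (fun t => Rabs t) (fun t => Rabs (t - 1)));
    [apply continuous_Rabs|].
  apply (continuous_Rabs_comp (fun t => t - 1)).
  apply (ex_derive_continuous (V := R_NormedModule)); auto_derive; exact I.
Qed.

Lemma continuous_sum_f_R0 (f : nat -> R -> R) (m : nat) (x : R) :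
  (forall k, continuous (f k) x) -> continuous (fun y => sum_f_R0 (fun k => f k y) m) x.
Proof.
  intro Hf; induction m as [|m IH]; simpl; [apply Hf|].
  apply (continuous_plus (fun y => sum_f_R0 (fun k => f k y) m) (f (S m))); auto.
Qed.

Lemma continuous_unif_lim (f : nat -> R -> R) (g : R -> R) (x : R) :
  (forall n t, continuous (f n) t) ->
  (forall eps, 0 < eps -> exists N, forall n t, (N <= n)%nat -> Rabs (g t - f n t) < eps) ->
  continuous g x.
Proof.
  intros Hf Hcv; apply continuity_pt_filterlim.
  apply (CVU_continuity f g x (mkposreal 1 Rlt_0_1)); [| |apply Boule_center].
  - intros eps Heps; destruct (Hcv eps Heps) as [N HN].
    exists N; intros n y Hn _; apply HN, Hn.
  - intros n y _; apply continuity_pt_filterlim, Hf.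
Qed.

Definition Ti_clamped (c : nat) (t : R) : R := Ti c (clamp01 t).

Lemma continuous_Ti_clamped (a : nat) (x : R) : continuous (Ti_clamped (S a)) x.
Proof.
  apply (continuous_unif_lim (fun n t => sum_f_R0 (tg_alt (ti_term (S a) (clamp01 t))) n)).
  - intros n t; apply continuous_sum_f_R0; intro k.
    apply (continuous_comp clamp01
             (fun u => (-1) ^ k * (u ^ (2 * k + 1) / INR (2 * k + 1) ^ S a)));
      [apply continuous_clamp01|].
    apply (ex_derive_continuous (V := R_NormedModule)); auto_derive; exact I.
  - intros eps Heps; destruct (Un_cv_inv_INR_S eps Heps) as [N HN].
    exists N; intros n t Hn; eapply Rle_lt_trans.
    + apply Ti_sub_partial_sum, clamp01_in.
    + specialize (HN (S n) ltac:(lia)); unfold Rdist in HN.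
      rewrite Rminus_0_r, Rabs_pos_eq in HN; [exact HN|].
      left; apply Rinv_0_lt_compat, lt_0_INR; lia.
Qed.

Definition Ti_quot_clamped (j : nat) (t : R) : R :=
  Ti_clamped (2 * j + 1) t / (1 + clamp01 t ^ 2).

Lemma continuous_Ti_quot_clamped (j : nat) (x : R) : continuous (Ti_quot_clamped j) x.
Proof.
  apply (continuous_mult (Ti_clamped (2 * j + 1)) (fun t => / (1 + clamp01 t ^ 2))).
  - rewrite Nat.add_1_r; apply continuous_Ti_clamped.
  - apply (continuous_comp clamp01 (fun u => / (1 + u ^ 2))); [apply continuous_clamp01|].
    apply (ex_derive_continuous (V := R_NormedModule)); auto_derive.
    pose proof (pow2_ge_0 (clamp01 x)); lra.
Qed.

Definition Ti_antideriv_clamped (j : nat) (y : R) : R := Ti_antideriv j (clamp01 y).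

Lemma continuous_Ti_antideriv_clamped (j : nat) (x : R) :
  continuous (Ti_antideriv_clamped j) x.
Proof.
  apply (continuous_mult (fun _ => / 2)
    (fun y => sum_f_R0 (fun k => (-1) ^ k * Ti_clamped (k + 1) y
                                   * Ti_clamped (2 * j - k + 1) y) (2 * j)));
    [apply continuous_const|].
  apply continuous_sum_f_R0; intro k.
  apply (continuous_mult (fun y => (-1) ^ k * Ti_clamped (k + 1) y)).
  - apply (continuous_mult (fun _ => (-1) ^ k)); [apply continuous_const|].
    rewrite Nat.add_1_r; apply continuous_Ti_clamped.
  - rewrite Nat.add_1_r; apply continuous_Ti_clamped.
Qed.

Lemma continuous_eq_at_left (f g : R -> R) (a x : R) :
  a < x -> continuous f x -> continuous g x ->
  (forall y, a < y < x -> f y = g y) -> f x = g x.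
Proof.
  intros Hax Hf Hg Hfg.
  apply (filterlim_locally_unique (F := at_left x) f).
  - eapply filterlim_filter_le_1; [apply filter_le_within | exact Hf].
  - apply (filterlim_ext_loc g).
    + assert (Hd : 0 < x - a) by lra.
      exists (mkposreal _ Hd); intros y Hy Hyx; symmetry; apply Hfg.
      apply Rabs_lt_between' in Hy; simpl in Hy; lra.
    + eapply filterlim_filter_le_1; [apply filter_le_within | exact Hg].
Qed.

Lemma ex_RInt_Ti_quot_clamped (j : nat) (b : R) : ex_RInt (Ti_quot_clamped j) 0 b.
Proof.
  apply (ex_RInt_continuous (V := R_CompleteNormedModule)); intros.
  apply continuous_Ti_quot_clamped.
Qed.

Lemma RInt_Ti_quot_clamped_lt1 (j : nat) (y : R) : 0 <= y < 1 ->
  RInt (Ti_quot_clamped j) 0 y = Ti_antideriv j y.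
Proof.
  intro Hy; apply is_RInt_unique.
  replace (Ti_antideriv j y) with (minus (Ti_antideriv j y) (Ti_antideriv j 0))
    by (rewrite Ti_antideriv_0; unfold minus, plus, opp; simpl; ring).
  apply (is_RInt_derive (V := R_CompleteNormedModule)).
  - intros x Hx; rewrite Rmin_left, Rmax_right in Hx by lra.
    eapply is_derive_eq; [apply is_derive_Ti_antideriv, Rabs_def1; lra|].
    unfold Ti_quot_clamped, Ti_clamped; rewrite clamp01_id by lra; reflexivity.
  - intros; apply continuous_Ti_quot_clamped.
Qed.

(* The equality on [0,1) extends to the endpoint by continuity of both sides. *)
Lemma RInt_Ti_quot_clamped_1 (j : nat) :
  RInt (Ti_quot_clamped j) 0 1 = Ti_antideriv_clamped j 1.
Proof.
  apply (continuous_eq_at_left (RInt (Ti_quot_clamped j) 0) _ 0).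
  - lra.
  - apply (ex_derive_continuous (V := R_NormedModule)); eexists.
    apply (is_derive_RInt (Ti_quot_clamped j) _ 0); [|apply continuous_Ti_quot_clamped].
    exists (mkposreal 1 Rlt_0_1); intros b _.
    apply (RInt_correct (V := R_CompleteNormedModule)), ex_RInt_Ti_quot_clamped.
  - apply continuous_Ti_antideriv_clamped.
  - intros y Hy; unfold Ti_antideriv_clamped; rewrite clamp01_id by lra.
    apply RInt_Ti_quot_clamped_lt1; lra.
Qed.

Theorem lemma2 (j : nat) :
  is_RInt (fun t : R => Ti (2 * j + 1) t / (1 + t ^ 2)) 0 1
    (/ 2 * sum_f_R0 (fun k : nat => (-1) ^ k * dbeta (k + 1) * dbeta (2 * j - k + 1)) (2 * j)).
Proof.
  apply (is_RInt_ext (Ti_quot_clamped j)).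
  { intros x Hx; rewrite Rmin_left, Rmax_right in Hx by lra.
    unfold Ti_quot_clamped, Ti_clamped; rewrite clamp01_id by lra; reflexivity. }
  replace (/ 2 * _) with (RInt (Ti_quot_clamped j) 0 1).
  - apply (RInt_correct (V := R_CompleteNormedModule)), ex_RInt_Ti_quot_clamped.
  - rewrite RInt_Ti_quot_clamped_1; unfold Ti_antideriv_clamped, Ti_antideriv.
    rewrite clamp01_id by lra; f_equal; apply sum_eq; intros k _; rewrite !Ti_1; reflexivity.
Qed.
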